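(* Let $q_1$ and $q_2$ be well-formed PIFO trees. If $q_1 \preceq q_2$, then $\mathsf{flush}(q_1) = \mathsf{flush}(q_2)$.
   Context: Fix a set $\mathsf{Pkt}$ of packets and a totally ordered set $\mathsf{Rk}$ of ranks (smaller is more favorable). PIFOs: for a set $S$, a PIFO over $S$ is a finite sequence of pairs $(s,r)\in S\times\mathsf{Rk}$ in insertion order; $\mathsf{PIFO}(S)$ is the set of these. $\mathsf{push}_{\mathsf{PIFO}}(p,s,r)$ appends $(s,r)$. $\mathsf{pop}_{\mathsf{PIFO}}(p)$ is undefined if $p$ is empty; otherwise it removes the entry of minimal rank (earliest-inserted among ties) and returns $(s,p')$. $|p|$ is the number of entries, $|p|_s$ the number with element $s$. Topologies: $\mathsf{Topo}$ is the smallest set with $*\in\mathsf{Topo}$ and $\mathsf{Node}(\vec t)\in\mathsf{Topo}$ for $n\in\mathbb{N}$, $\vec t\in\mathsf{Topo}^n$. PIFO trees: $\mathsf{Leaf}(p)\in\mathsf{PIFOTree}( * )$ for $p\in\mathsf{PIFO}(\mathsf{Pkt})$; $\mathsf{Internal}(\vec q,p)\in\mathsf{PIFOTree}(\mathsf{Node}(\vec t))$ whenever $\vec t\in\mathsf{Topo}^n$, $p\in\mathsf{PIFO}(\{1,\dots,n\})$, $\vec q[i]\in\mathsf{PIFOTree}(\vec t[i])$. $\vec q[q'/i]$ replaces the $i$-th entry by $q'$. pop (partial): $\mathsf{pop}(\mathsf{Leaf}(p))=(pkt,\mathsf{Leaf}(p'))$ if $\mathsf{pop}_{\mathsf{PIFO}}(p)=(pkt,p')$;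 $\mathsf{pop}(\mathsf{Internal}(\vec q,p))=(pkt,\mathsf{Internal}(\vec q[q'/i],p'))$ if $\mathsf{pop}_{\mathsf{PIFO}}(p)=(i,p')$ and $\mathsf{pop}(\vec q[i])=(pkt,q')$; undefined otherwise. Paths: $\mathsf{Path}( * )=\mathsf{Rk}$; $\mathsf{Path}(\mathsf{Node}(\vec t))$ consists of $(i,r)::pt$ with $1\le i\le n$, $r\in\mathsf{Rk}$, $pt\in\mathsf{Path}(\vec t[i])$. push: $\mathsf{push}(\mathsf{Leaf}(p),pkt,r)=\mathsf{Leaf}(\mathsf{push}_{\mathsf{PIFO}}(p,pkt,r))$; $\mathsf{push}(\mathsf{Internal}(\vec q,p),pkt,(i,r)::pt)=\mathsf{Internal}(\vec q[\mathsf{push}(\vec q[i],pkt,pt)/i],\mathsf{push}_{\mathsf{PIFO}}(p,i,r))$. Size: $|\mathsf{Leaf}(p)|=|p|$, $|\mathsf{Internal}(\vec q,p)|=\sum_i|\vec q[i]|$. Well-formedness: $\vdash\mathsf{Leaf}(p)$ always; $\vdash\mathsf{Internal}(\vec q,p)$ iff for all $i$, $\vdash\vec q[i]$ and $|p|_i=|\vec q[i]|$. Flush: for well-formed $q$, by induction on $|q|$: $\mathsf{flush}(q)=\epsilon$ (empty word) if $|q|=0$, and $\mathsf{flush}(q)=\mathsf{flush}(q')\cdot pkt$ if $|q|>0$ and $\mathsf{pop}(q)=(pkt,q')$. Simulation: for $q_1\in\mathsf{PIFOTree}(t_1)$, $q_2\in\mathsf{PIFOTree}(t_2)$, a relation $R\subseteq\mathsf{PIFOTree}(t_1)\times\mathsf{PIFOTree}(t_2)$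 is a simulation if for all $pkt$ and $u_1\mathrel{R}u_2$: (1) if $\mathsf{pop}(u_1)$ is undefined so is $\mathsf{pop}(u_2)$; (2) if $\mathsf{pop}(u_1)=(pkt,u_1')$ then $\mathsf{pop}(u_2)=(pkt,u_2')$ with $u_1'\mathrel{R}u_2'$; (3) for every $pt_1\in\mathsf{Path}(t_1)$ there is $pt_2\in\mathsf{Path}(t_2)$ with $\mathsf{push}(u_1,pkt,pt_1)\mathrel{R}\mathsf{push}(u_2,pkt,pt_2)$. $q_1\preceq q_2$ means some simulation relates $q_1$ and $q_2$. *)

From Stdlib Require List.
From mathcomp Require Import all_boot all_order.
Import (notations) List.ListNotations.
Notation Forall := List.Forall.
Notation Forall2 := List.Forall2.
Notation nth_error := List.nth_error.
Set Implicit Arguments. Unset Strict Implicit. Unset Printing Implicit Defensive.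
Import Order.TTheory.
Local Open Scope order_scope.

Inductive Topo : Type :=
| Star : Topo
| Node : list Topo -> Topo.

Section PIFOTrees.
Context {d : Order.disp_t} (Rk : orderType d) (Pkt : Type).

(* ---------- PIFOs: a PIFO over S is a finite sequence of (element, rank)
   pairs in insertion order. ---------- *)
Definition pifo (S : Type) := seq (S * Rk)%type.

Definition pifo_push (S : Type) (p : pifo S) (s : S) (r : Rk) : pifo S :=
  rcons p (s, r).

(* removes the entry of minimal rank (earliest-inserted among ties);
   returns the removed entry and the remaining PIFO *)
Fixpoint pifo_pop_entry (S : Type) (p : pifo S) : option ((S * Rk) * pifo S) :=
  match p with
  | [::] => None
  | x :: p' =>
      match pifo_pop_entry p' with
      | None => Some (x, [::])
      | Some (y, p'') => if x.2 <= y.2 then Some (x, p') else Some (y, x :: p'')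
      end
  end.

Definition pifo_pop (S : Type) (p : pifo S) : option (S * pifo S) :=
  match pifo_pop_entry p with
  | None => None
  | Some (x, p') => Some (x.1, p')
  end.

(* ---------- PIFO trees (untyped syntax; children indexed from 0) ---------- *)
Inductive tree : Type :=
| Leaf : pifo Pkt -> tree
| Internal : list tree -> pifo nat -> tree.

Inductive has_topo : tree -> Topo -> Prop :=
| HTLeaf (p : pifo Pkt) : has_topo (Leaf p) Star
| HTInternal (qs : list tree) (ts : list Topo) (p : pifo nat) :
    Forall2 has_topo qs ts ->
    (forall e, e \in map fst p -> e < size ts)%N ->
    has_topo (Internal qs p) (Node ts).

Inductive path : Type :=
| PEnd : Rk -> path
| PStep : nat -> Rk -> path -> path.

Inductive has_path_topo : path -> Topo -> Prop :=
| HPEnd (r : Rk) : has_path_topo (PEnd r) Star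
| HPStep (ts : list Topo) (i : nat) (r : Rk) (pt : path) (t : Topo) :
    nth_error ts i = Some t -> has_path_topo pt t ->
    has_path_topo (PStep i r pt) (Node ts).

Fixpoint tsize (q : tree) : nat :=
  match q with
  | Leaf p => size p
  | Internal qs _ => sumn (map tsize qs)
  end.

Inductive wf : tree -> Prop :=
| WFLeaf (p : pifo Pkt) : wf (Leaf p)
| WFInternal (qs : list tree) (p : pifo nat) :
    Forall wf qs ->
    (forall i (qi : tree), nth_error qs i = Some qi ->
        count (fun e => e.1 == i) p = tsize qi) ->
    wf (Internal qs p).

Fixpoint tpop (q : tree) : option (Pkt * tree) :=
  match q with
  | Leaf p =>
      match pifo_pop p with
      | None => None
      | Some (pkt, p') => Some (pkt, Leaf p')
      end
  | Internal qs p =>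
      match pifo_pop p with
      | None => None
      | Some (i, p') =>
          let fix go (l : list tree) (j : nat) : option (Pkt * list tree) :=
            match l with
            | [::] => None
            | q0 :: l' =>
                match j with
                | j'.+1 =>
                    match go l' j' with
                    | None => None
                    | Some (pkt, l'') => Some (pkt, q0 :: l'')
                    end
                | 0 =>
                    match tpop q0 with
                    | None => None
                    | Some (pkt, q0') => Some (pkt, q0' :: l')
                    end
                end
            end in
          match go qs i with
          | None => None
          | Some (pkt, qs') => Some (pkt, Internal qs' p')
          end
      end
  end.

(* push (only meaningful on well-typed tree/path pairs; ill-typed
   combinations leave the tree unchanged) *)
Fixpoint tpush (q : tree) (pkt : Pkt) (pt : path) {struct q} : tree :=
  match q, pt with
  | Leaf p, PEnd r => Leaf (pifo_push p pkt r)
  | Internal qs p, PStep i r pt' =>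
      let fix go (l : list tree) (j : nat) : list tree :=
        match l with
        | [::] => [::]
        | q0 :: l' =>
            match j with
            | j'.+1 => q0 :: go l' j'
            | 0 => tpush q0 pkt pt' :: l'
            end
        end in
      Internal (go qs i) (pifo_push p i r)
  | _, _ => q
  end.

(* flush, by induction on |q|: flush(q) = flush(q') . pkt where pop(q) = (pkt,q') *)
Fixpoint flush_aux (n : nat) (q : tree) : seq Pkt :=
  match n with
  | 0 => [::]
  | n'.+1 =>
      match tpop q with
      | None => [::]
      | Some (pkt, q') => rcons (flush_aux n' q') pkt
      end
  end.

Definition flush (q : tree) : seq Pkt := flush_aux (tsize q) q.

Definition simulation (t1 t2 : Topo) (R : tree -> tree -> Prop) : Prop :=
  forall u1 u2, R u1 u2 ->
    [/\ has_topo u1 t1, has_topo u2 t2,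
        (tpop u1 = None -> tpop u2 = None),
        (forall pkt u1', tpop u1 = Some (pkt, u1') ->
            exists2 u2', tpop u2 = Some (pkt, u2') & R u1' u2') &
        (forall pkt pt1, has_path_topo pt1 t1 ->
            exists2 pt2, has_path_topo pt2 t2 &
                         R (tpush u1 pkt pt1) (tpush u2 pkt pt2))].

Definition simulates (t1 t2 : Topo) (q1 q2 : tree) : Prop :=
  exists2 R, simulation t1 t2 R & R q1 q2.

End PIFOTrees.

(** A simulation matches every pop of [q1] by a pop of [q2] yielding the same
    packet and related residual trees, so by induction on [n] the first [n]
    pops of [q1] and [q2] coincide for every [n].  Each successful pop lowers
    the size of a tree by one, so popping stops at the size of the tree, and
    both flushes agree with the [n]-step pop sequence for [n] at least both
    sizes. *)

From mathcomp Require Import all_boot all_order.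
(* Imported last, so that [tsize] is the tree size and not the tuple size. *)

Section Flush.
Context {d : Order.disp_t} {Rk : orderType d} {Pkt : Type}.
Local Notation tree := (tree Rk Pkt).
Local Notation tsize := (@tsize _ Rk Pkt).

Lemma pifo_pop_entry_None {S : Type} {p : pifo Rk S} :
  pifo_pop_entry p = None -> p = [::].
Proof. by case: p => //= x p; case: pifo_pop_entry => [[y p']|] //; case: ifP. Qed.

Lemma pifo_pop_entry_size (S : Type) (p p' : pifo Rk S) x :
  pifo_pop_entry p = Some (x, p') -> size p = (size p').+1.
Proof.
elim: p x p' => [|y p IHp] x p' //=.
case E: (pifo_pop_entry p) => [[z p'']|].
  by case: ifP => _ [_ <-] //=; rewrite (IHp _ _ E).
by move=> [_ <-]; rewrite (pifo_pop_entry_None E).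
Qed.

Lemma pifo_pop_size (S : Type) (p p' : pifo Rk S) s :
  pifo_pop p = Some (s, p') -> size p = (size p').+1.
Proof.
rewrite /pifo_pop; case E: pifo_pop_entry => [[x p'']|] // [_ <-].
exact: pifo_pop_entry_size E.
Qed.

(* The anonymous [fix] inside [tpop] that pops the [j]-th child. *)
Fixpoint pop_child (l : seq tree) (j : nat) : option (Pkt * seq tree) :=
  match l with
  | [::] => None
  | q0 :: l' =>
      match j with
      | j'.+1 => match pop_child l' j' with
                 | None => None
                 | Some (pkt, l'') => Some (pkt, q0 :: l'')
                 end
      | 0 => match tpop q0 with
             | None => None
             | Some (pkt, q0') => Some (pkt, q0' :: l')
             end
      end
  end.

Lemma tpop_Internal qs p : tpop (Internal qs p) =
  match pifo_pop p with
  | None => None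
  | Some (i, p') => match pop_child qs i with
                    | None => None
                    | Some (pkt, qs') => Some (pkt, Internal qs' p')
                    end
  end.
Proof. by []. Qed.

Fixpoint tree_nested_ind (P : tree -> Prop)
    (HLeaf : forall p, P (Leaf p))
    (HInternal : forall qs p, Forall P qs -> P (Internal qs p))
    (q : tree) : P q :=
  match q with
  | Leaf p => HLeaf p
  | Internal qs p =>
      HInternal qs p ((fix all_P l : Forall P l :=
        match l with
        | [::] => List.Forall_nil P
        | q0 :: l' => List.Forall_cons q0 (@tree_nested_ind P HLeaf HInternal q0)
                                          (all_P l')
        end) qs)
  end.

Definition pop_shrinks (q : tree) : Prop :=
  forall pkt q', tpop q = Some (pkt, q') -> tsize q = (tsize q').+1.

Lemma pop_child_tsize l j pkt l' : Forall pop_shrinks l ->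
  pop_child l j = Some (pkt, l') ->
  sumn (map tsize l) = (sumn (map tsize l')).+1.
Proof.
elim: l j pkt l' => [|q l IHl] [|j] pkt l' //=.
all: move=> /List.Forall_cons_iff [shrink_q shrink_l].
  case E: (tpop q) => [[pkt' q']|] // [_ <-] /=.
  by rewrite (shrink_q _ _ E).
case E: (pop_child l j) => [[pkt' l'']|] // [_ <-] /=.
by rewrite (IHl _ _ _ shrink_l E) addnS.
Qed.

Lemma tpop_tsize {q : tree} {pkt q'} :
  tpop q = Some (pkt, q') -> tsize q = (tsize q').+1.
Proof.
move: pkt q'; elim/tree_nested_ind: q => [p|qs p shrink_qs] pkt q'.
  rewrite /=; case E: pifo_pop => [[pkt' p']|] // [_ <-] /=.
  exact: pifo_pop_size E.
rewrite tpop_Internal; case: pifo_pop => [[i p']|] //.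
case E: pop_child => [[pkt' qs']|] // [_ <-] /=.
exact: pop_child_tsize E.
Qed.

Lemma tpop_tsize0 (q : tree) : tsize q = 0 -> tpop q = None.
Proof.
move=> size0; case E: (tpop q) => [[pkt q']|] //.
by rewrite (tpop_tsize E) in size0.
Qed.

Lemma flush_auxE {n} {q : tree} : tsize q <= n -> flush_aux n q = flush q.
Proof.
rewrite /flush; elim: n q => [|n IHn] q.
  by rewrite leqn0 => /eqP ->.
case Es: (tsize q) => [|k] le_size_n /=.
  by rewrite tpop_tsize0.
case E: (tpop q) => [[pkt q']|] //.
have size_q' : tsize q' = k by apply/eqP; rewrite -eqSS -Es (tpop_tsize E).
by rewrite IHn size_q'.
Qed.

Lemma simulation_flush_aux t1 t2 (R : tree -> tree -> Prop) n u1 u2 :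
  simulation t1 t2 R -> R u1 u2 -> flush_aux n u1 = flush_aux n u2.
Proof.
move=> sim; elim: n u1 u2 => [|n IHn] u1 u2 R12 //=.
have [_ _ pop_none pop_some _] := sim _ _ R12.
case E: (tpop u1) => [[pkt u1']|]; last by rewrite pop_none.
have [u2' -> R12'] := pop_some _ _ E.
by rewrite (IHn _ _ R12').
Qed.

End Flush.

Theorem lemma4p6 (d : Order.disp_t) (Rk : orderType d) (Pkt : Type)
  (t1 t2 : Topo) (q1 q2 : tree Rk Pkt) :
  has_topo q1 t1 -> has_topo q2 t2 ->
  wf q1 -> wf q2 ->
  simulates t1 t2 q1 q2 ->
  flush q1 = flush q2.
Proof.
move=> _ _ _ _ [R sim R12].
rewrite -(flush_auxE (leq_addr (tsize q2) (tsize q1))).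
rewrite -(flush_auxE (leq_addl (tsize q1) (tsize q2))).
exact: simulation_flush_aux sim R12.
Qed.
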